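(* Let $\ln_G:(0,\infty)\to\mathbb{R}$ be a continuous, strictly increasing, strictly concave function with $\ln_G(1)=0$. Put $G(t):=\ln_G(e^t)$ and $\chi(u,v):=G\big(G^{-1}(u)+G^{-1}(v)\big)$ (for $u,v$ in the range of $G$), so that $\ln_G(xy)=\chi(\ln_G x,\ln_G y)$ for all $x,y>0$. Fix $\alpha>0$, $\alpha\neq 1$, and for a probability distribution $(p_1,\dots,p_W)$ define $$Z_{G,\alpha}(p_1,\dots,p_W):=\frac{\ln_G\big(\sum_{i=1}^W p_i^{\alpha}\big)}{1-\alpha}.$$ Let $A$, $B$ be statistically independent systems with arbitrary probability distributions $\{p_i^A\}_{i=1}^{W_A}$, $\{p_j^B\}_{j=1}^{W_B}$, and let $A\cup B$ be the composed system with joint distribution $p^{A\cup B}_{ij}=p_i^Ap_j^B$. Then $$Z_{G,\alpha}(A\cup B)=\Phi\big(Z_{G,\alpha}(A),Z_{G,\alpha}(B)\big),\qquad \Phi(x,y):=\frac{1}{1-\alpha}\,\chi\big((1-\alpha)x,(1-\alpha)y\big),$$ and $\Phi$ satisfies (wherever defined) $\Phi(x,y)=\Phi(y,x)$, $\Phi(x,0)=x$, and $\Phi(\Phi(x,y),z)=\Phi(x,\Phi(y,z))$.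
   Context: $Z_{G,\alpha}(X)$ denotes the entropy evaluated on the probability distribution of system $X$. *)

From HB Require Import structures.
From mathcomp Require Import all_boot all_order all_algebra.
From mathcomp Require Import all_classical all_reals all_analysis.
Set Implicit Arguments. Unset Strict Implicit. Unset Printing Implicit Defensive.
Import Order.TTheory GRing.Theory Num.Theory.
Import numFieldNormedType.Exports.
Local Open Scope ring_scope.
Local Open Scope classical_set_scope.

Section GEntropy.
Variable R : realType.

(* Hypotheses on ln_G : (0,oo) -> R (values of lnG outside (0,oo) are irrelevant). *)
Definition lnG_admissible (lnG : R -> R) : Prop :=
  (forall x : R, 0 < x -> {for x, continuous lnG}) /\
  (forall x y : R, 0 < x -> x < y -> lnG x < lnG y) /\
  (forall x y t : R, 0 < x -> 0 < y -> x != y -> 0 < t < 1 ->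
      t * lnG x + (1 - t) * lnG y < lnG (t * x + (1 - t) * y)) /\
  lnG 1 = 0.

Definition Gfun (lnG : R -> R) (t : R) : R := lnG (expR t).

Definition in_rangeG (lnG : R -> R) (u : R) : Prop := exists t : R, Gfun lnG t = u.

(* G^{-1}(u): some t with G t = u (unique, since G is strictly increasing),
   arbitrary (0) when u is outside the range of G. *)
Definition Ginv (lnG : R -> R) (u : R) : R := xget 0 [set t | Gfun lnG t = u].

Definition chi (lnG : R -> R) (u v : R) : R := Gfun lnG (Ginv lnG u + Ginv lnG v).

Definition Phi (lnG : R -> R) (alpha x y : R) : R :=
  (1 - alpha)^-1 * chi lnG ((1 - alpha) * x) ((1 - alpha) * y).

Definition is_distr (T : finType) (p : T -> R) : Prop :=
  (forall i, 0 <= p i) /\ \sum_(i : T) p i = 1.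

(* Z_{G,alpha}(p) := ln_G(sum_i p_i^alpha) / (1 - alpha), with 0^alpha = 0 (powR) *)
Definition ZGa (lnG : R -> R) (alpha : R) (T : finType) (p : T -> R) : R :=
  lnG (\sum_(i : T) p i `^ alpha) / (1 - alpha).

End GEntropy.

From HB Require Import structures.
From mathcomp Require Import all_boot all_order all_algebra.
From mathcomp Require Import all_classical all_reals all_analysis.
Import Order.TTheory GRing.Theory Num.Theory.
Local Open Scope ring_scope.

(* Only the strict monotonicity of ln_G and ln_G(1) = 0 are needed: monotonicity
   makes G injective, so G^{-1} inverts G on its range, and then chi is just
   addition transported along G, which gives commutativity, associativity and the
   unit 0 = G(0).  The composition law follows from ln_G(xy) = chi(ln_G x, ln_G y)
   and the factorisation of sum_ij (p_i q_j)^alpha. *)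

Section GeneratorInverse.
Variables (R : realType) (lnG : R -> R).
Hypothesis lnG_increasing : forall x y : R, 0 < x -> x < y -> lnG x < lnG y.

Lemma Gfun_inj : injective (Gfun lnG).
Proof.
have Glt s t : s < t -> Gfun lnG s < Gfun lnG t.
  by move=> st; apply: lnG_increasing; rewrite ?expR_gt0 ?ltr_expR.
move=> s t E; case: (ltgtP s t) => // [/Glt|/Glt]; by rewrite E ltxx.
Qed.

Lemma GfunK : cancel (Gfun lnG) (Ginv lnG).
Proof.
move=> t; apply: Gfun_inj.
exact: (@xgetPex _ 0 [set s | Gfun lnG s = Gfun lnG t] (ex_intro _ t erefl)).
Qed.

Lemma GinvK u : in_rangeG lnG u -> Gfun lnG (Ginv lnG u) = u.
Proof. by case=> t <-; rewrite GfunK. Qed.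

Lemma Ginv0 : lnG 1 = 0 -> Ginv lnG 0 = 0.
Proof. by move=> lnG1; rewrite -[in LHS]lnG1 -expR0 GfunK. Qed.

Lemma lnG_mul x y : 0 < x -> 0 < y -> lnG (x * y) = chi lnG (lnG x) (lnG y).
Proof.
move=> x0 y0; rewrite -[x]lnK // -[y]lnK // -expRD.
by rewrite /chi -!/(Gfun lnG _) !GfunK.
Qed.

Lemma chiC u v : chi lnG u v = chi lnG v u.
Proof. by rewrite /chi addrC. Qed.

Lemma chiA u v w : chi lnG (chi lnG u v) w = chi lnG u (chi lnG v w).
Proof. by rewrite /chi !GfunK addrA. Qed.

Lemma chiu0 u : lnG 1 = 0 -> in_rangeG lnG u -> chi lnG u 0 = u.
Proof. by move=> lnG1 /GinvK uG; rewrite /chi Ginv0 // addr0. Qed.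

Section Rescaled.
Variable alpha : R.
Hypothesis alpha_neq1 : alpha != 1.

Let c_neq0 : 1 - alpha != 0.
Proof. by rewrite subr_eq0 eq_sym. Qed.

Lemma PhiC x y : Phi lnG alpha x y = Phi lnG alpha y x.
Proof. by rewrite /Phi chiC. Qed.

Lemma Phix0 x : lnG 1 = 0 -> in_rangeG lnG ((1 - alpha) * x) ->
  Phi lnG alpha x 0 = x.
Proof. by move=> lnG1 hx; rewrite /Phi mulr0 chiu0 // mulKf. Qed.

Lemma PhiA x y z :
  Phi lnG alpha (Phi lnG alpha x y) z = Phi lnG alpha x (Phi lnG alpha y z).
Proof. by rewrite /Phi !mulVKf // chiA. Qed.

Lemma ZGa_prod (T1 T2 : finType) (p : T1 -> R) (q : T2 -> R) :
    0 < \sum_i p i `^ alpha -> 0 < \sum_j q j `^ alpha ->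
    (forall i, 0 <= p i) -> (forall j, 0 <= q j) ->
  ZGa lnG alpha (fun ij : T1 * T2 => p ij.1 * q ij.2)
  = Phi lnG alpha (ZGa lnG alpha p) (ZGa lnG alpha q).
Proof.
move=> Sp Sq p0 q0; rewrite /ZGa /=.
have -> : \sum_(ij : T1 * T2) (p ij.1 * q ij.2) `^ alpha
          = (\sum_i p i `^ alpha) * (\sum_j q j `^ alpha).
  rewrite mulr_suml; under [RHS]eq_bigr => i _ do rewrite mulr_sumr.
  by rewrite pair_bigA; apply: eq_bigr => -[i j] _; rewrite powRM.
by rewrite /Phi !(mulrC (1 - alpha) (_ / _)) !divfK // lnG_mul // mulrC.
Qed.

End Rescaled.
End GeneratorInverse.

Lemma sum_powR_gt0 (R : realType) (T : finType) (p : T -> R) (a : R) :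
  is_distr p -> 0 < \sum_i p i `^ a.
Proof.
case=> p0 p1; have pa0 i : 0 <= p i `^ a by exact: powR_ge0.
rewrite lt_neqAle sumr_ge0 ?andbT //; apply/eqP => /esym /psumr_eq0P psum0.
have pi0 i : p i = 0 by apply: (@powR_eq0_eq0 _ _ a); exact: psum0.
by move: p1; rewrite big1 // => /eqP; rewrite eq_sym oner_eq0.
Qed.

Theorem mainTheorem4 (R : realType) (lnG : R -> R) (alpha : R) :
  lnG_admissible lnG -> 0 < alpha -> alpha != 1 ->
  (* composition law for independent systems A, B *)
  (forall (WA WB : nat) (pA : 'I_WA -> R) (pB : 'I_WB -> R),
      is_distr pA -> is_distr pB ->
      ZGa lnG alpha (fun ij : 'I_WA * 'I_WB => pA ij.1 * pB ij.2)
      = Phi lnG alpha (ZGa lnG alpha pA) (ZGa lnG alpha pB)) /\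
  (* properties of Phi, wherever defined *)
  (forall x y : R,
      in_rangeG lnG ((1 - alpha) * x) -> in_rangeG lnG ((1 - alpha) * y) ->
      Phi lnG alpha x y = Phi lnG alpha y x) /\
  (forall x : R, in_rangeG lnG ((1 - alpha) * x) -> Phi lnG alpha x 0 = x) /\
  (forall x y z : R,
      in_rangeG lnG ((1 - alpha) * x) -> in_rangeG lnG ((1 - alpha) * y) ->
      in_rangeG lnG ((1 - alpha) * z) ->
      Phi lnG alpha (Phi lnG alpha x y) z = Phi lnG alpha x (Phi lnG alpha y z)).
Proof.
case=> _ [lnG_increasing [_ lnG1]] _ alpha_neq1.
split; [|split; [|split]].
- move=> WA WB pA pB dA dB; apply: ZGa_prod => //;
    by [exact: sum_powR_gt0 | case: dA | case: dB].
- by move=> x y _ _; exact: PhiC.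
- by move=> x; exact: Phix0.
- by move=> x y z _ _ _; exact: PhiA.
Qed.
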